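(* The only pair of natural numbers $(x,y)$ (with $0 \in \mathbb{N}$) such that $7^x-5^y$ is a perfect square is $(0,0)$.
   Context: Here $\mathbb{N}=\{0,1,2,\dots\}$, and a perfect square means $n^2$ for some $n\in\mathbb{N}$. *)

From Stdlib Require Import ZArith.
Open Scope Z_scope.

Definition is_perfect_square (z : Z) : Prop :=
  exists n : nat, z = (Z.of_nat n) ^ 2.

(* Modulo 4, a square is 0 or 1 while 7^x - 5^y is 2 for odd x, so x = 2a and
   (7^a - z)(7^a + z) = 5^y. Both factors are powers of 5, and they cannot both
   be divisible by 5 since their sum 2 * 7^a is not; hence 7^a - z = 1 and
   2 * 7^a = 1 + 5^y. If a > 0 then 7 divides 1 + 5^y, which forces y = 3 mod 6
   and then 9 divides 1 + 5^y = 2 * 7^a, which is absurd. *)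

From Stdlib Require Import ZArith Znumtheory Zpow_facts Lia.
Open Scope Z_scope.

Lemma prime_5 : prime 5.
Proof.
  apply prime_alt; split; [lia|].
  intros n Hn [k Hk]. assert (1 < k < 5) by nia. nia.
Qed.

Lemma prime_7 : prime 7.
Proof.
  apply prime_alt; split; [lia|].
  intros n Hn [k Hk]. assert (1 < k < 7) by nia. nia.
Qed.

Lemma pow_mod_period (b m p k : Z) :
  1 < m -> 0 < p -> 0 <= k -> b ^ p mod m = 1 -> b ^ k mod m = b ^ (k mod p) mod m.
Proof.
  intros Hm Hp Hk Hper.
  assert (Hq : 0 <= k / p) by (apply Z.div_pos; lia).
  assert (Hr : 0 <= k mod p) by (apply Z.mod_pos_bound; lia).
  rewrite (Z_div_mod_eq_full k p) at 1.
  rewrite Z.pow_add_r, Z.pow_mul_r, Z.mul_mod, <- Z.mod_pow_l, Hper, Z.pow_1_l by nia.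
  rewrite Z.mod_1_l, Z.mul_1_l, Z.mod_mod by lia. reflexivity.
Qed.

Lemma square_mod4 (z : Z) : z ^ 2 mod 4 = 0 \/ z ^ 2 mod 4 = 1.
Proof.
  rewrite <- Z.mod_pow_l.
  assert (Hr : 0 <= z mod 4 < 4) by (apply Z.mod_pos_bound; lia).
  assert (Hcases : z mod 4 = 0 \/ z mod 4 = 1 \/ z mod 4 = 2 \/ z mod 4 = 3) by lia.
  destruct Hcases as [-> | [-> | [-> | ->]]]; cbn; auto.
Qed.

Lemma pow7_sub_pow5_square_even (x y z : Z) :
  0 <= x -> 0 <= y -> 7 ^ x - 5 ^ y = z ^ 2 -> x mod 2 = 0.
Proof.
  intros Hx Hy E.
  assert (H7 : 7 ^ x mod 4 = 7 ^ (x mod 2) mod 4) by (apply pow_mod_period; lia || reflexivity).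
  assert (H5 : 5 ^ y mod 4 = 1).
  { rewrite (pow_mod_period 5 4 1), Z.mod_1_r by (lia || reflexivity). reflexivity. }
  assert (Hx2 : 0 <= x mod 2 < 2) by (apply Z.mod_pos_bound; lia).
  pose proof (square_mod4 z) as Hsq.
  rewrite <- E, Zminus_mod, H7, H5 in Hsq.
  destruct (Z.eq_dec (x mod 2) 1) as [Hodd|]; [|lia].
  rewrite Hodd in Hsq. cbn in Hsq. lia.
Qed.

Lemma prime_dvd_of_dvd_pow (p n x : Z) :
  prime p -> 0 <= n -> 1 < x -> (x | p ^ n) -> (p | x).
Proof.
  intros Hp Hn Hx Hdvd.
  destruct (Zdivide_power_2 x p n Hn ltac:(lia) Hp Hdvd) as [m ->].
  destruct (Z_lt_le_dec 0 m) as [Hm|Hm].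
  - exists (p ^ (m - 1)).
    rewrite Z.mul_comm, <- Z.pow_succ_r by lia. f_equal; lia.
  - destruct (Z.eq_dec m 0) as [->|]; [cbn in Hx; lia|].
    rewrite Z.pow_neg_r in Hx; lia.
Qed.

Lemma diff_of_squares_prime_pow (p y w z : Z) :
  prime p -> p <> 2 -> 0 <= y -> 0 < w -> 0 <= z -> ~ (p | w) ->
  (w - z) * (w + z) = p ^ y -> w - z = 1.
Proof.
  intros Hp Hp2 Hy Hw Hz Hpw E.
  assert (Hpos : 0 < p ^ y) by (apply Z.pow_pos_nonneg; pose proof (prime_ge_2 p Hp); lia).
  assert (Hsub : 0 < w - z) by nia.
  destruct (Z.eq_dec (w - z) 1) as [|Hne]; [assumption|exfalso].
  assert (Hminus : (p | w - z)).
  { apply (prime_dvd_of_dvd_pow p y); [assumption..|lia|]. exists (w + z); lia. }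
  assert (Hplus : (p | w + z)).
  { apply (prime_dvd_of_dvd_pow p y); [assumption..|lia|]. exists (w - z); lia. }
  assert (H2w : (p | 2 * w)).
  { replace (2 * w) with ((w - z) + (w + z)) by ring. now apply Z.divide_add_r. }
  destruct (prime_mult p Hp 2 w H2w) as [H2|]; [|contradiction].
  exact (Hp2 (prime_div_prime p 2 Hp prime_2 H2)).
Qed.

Lemma succ_pow5_dvd7_dvd9 (y : Z) : 0 <= y -> (7 | 1 + 5 ^ y) -> (9 | 1 + 5 ^ y).
Proof.
  intros Hy H7.
  apply Z.mod_divide in H7; [|lia]. apply Z.mod_divide; [lia|].
  rewrite Zplus_mod, (pow_mod_period 5 7 6) in H7 by (lia || reflexivity).
  rewrite Zplus_mod, (pow_mod_period 5 9 6) by (lia || reflexivity).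
  assert (Hr : 0 <= y mod 6 < 6) by (apply Z.mod_pos_bound; lia).
  revert H7 Hr. generalize (y mod 6) as r. intros r H7 Hr.
  assert (Hcases : r = 0 \/ r = 1 \/ r = 2 \/ r = 3 \/ r = 4 \/ r = 5) by lia.
  destruct Hcases as [-> | [-> | [-> | [-> | [-> | ->]]]]]; vm_compute in H7 |- *; congruence.
Qed.

Lemma twice_pow7_eq_succ_pow5 (a y : Z) :
  0 <= a -> 0 <= y -> 2 * 7 ^ a = 1 + 5 ^ y -> a = 0 /\ y = 0.
Proof.
  intros Ha Hy E.
  destruct (Z.eq_dec a 0) as [->|Ha0].
  - split; [reflexivity|].
    destruct (Z.eq_dec y 0) as [|Hy0]; [assumption|].
    assert (H1 : 1 < 5 ^ y) by (apply Z.pow_gt_1; lia).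
    rewrite Z.pow_0_r in E. lia.
  - exfalso.
    assert (H7 : (7 | 1 + 5 ^ y)).
    { rewrite <- E. exists (2 * 7 ^ (a - 1)).
      rewrite <- Z.mul_assoc, (Z.mul_comm _ 7), <- Z.pow_succ_r by lia. f_equal; f_equal; lia. }
    assert (H3 : (3 | 2 * 7 ^ a)).
    { rewrite E. apply (Z.divide_trans _ 9); [now exists 3|].
      now apply succ_pow5_dvd7_dvd9. }
    destruct (prime_mult 3 prime_3 2 (7 ^ a) H3) as [H|H].
    + discriminate (prime_div_prime 3 2 prime_3 prime_2 H).
    + discriminate (prime_power_prime 3 7 a Ha prime_3 prime_7 H).
Qed.

Theorem mainTheorem3 : forall x y : nat,
  is_perfect_square (7 ^ Z.of_nat x - 5 ^ Z.of_nat y) <-> (x = 0%nat /\ y = 0%nat).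
Proof.
  intros x y. split.
  - intros [n Hn].
    assert (Heven : (2 | Z.of_nat x)).
    { apply Z.mod_divide; [lia|].
      exact (pow7_sub_pow5_square_even _ _ _ (Nat2Z.is_nonneg x) (Nat2Z.is_nonneg y) Hn). }
    destruct Heven as [a Hx].
    assert (Ha : 0 <= a) by lia.
    rewrite Hx, Z.pow_mul_r in Hn by lia.
    assert (Hw : 0 < 7 ^ a) by (apply Z.pow_pos_nonneg; lia).
    assert (Hfactor : (7 ^ a - Z.of_nat n) * (7 ^ a + Z.of_nat n) = 5 ^ Z.of_nat y) by nia.
    assert (Hone : 7 ^ a - Z.of_nat n = 1).
    { apply (diff_of_squares_prime_pow 5 (Z.of_nat y)); try lia; [exact prime_5|].
      intros H5. discriminate (prime_power_prime 5 7 a Ha prime_5 prime_7 H5). }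
    rewrite Hone in Hfactor.
    destruct (twice_pow7_eq_succ_pow5 a (Z.of_nat y)) as [Ha0 Hy0]; lia.
  - intros [-> ->]. exists 0%nat. reflexivity.
Qed.
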